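(* Let $m$ be a tour with core $K$. Then the interior of $K$ equals $\bigcap_{\theta\in\mathbb{S}^1}\mathrm{int}\big(D^+(\theta)\big)$. Moreover, $\partial K\subseteq\bigcup_{\theta\in\mathbb{S}^1}D(\theta)$.
   Context: Write $\mathbb{S}^1=\mathbb{R}/2\pi\mathbb{Z}$, $u(\theta)=(\cos\theta,\sin\theta)$ and $u^\perp(\theta)=(-\sin\theta,\cos\theta)$. A ruled function $R:\mathbb{S}^1\to\mathbb{R}$ is one having a left limit $R_l(\theta)$ and a right limit $R_r(\theta)$ at every point. A tour is a continuous map $m:\mathbb{S}^1\to\mathbb{R}^2$ such that: - $m$ has left and right derivatives at every point; - there is a ruled function $R$ with $m'_l(\theta)=R_l(\theta)u(\theta)$ and $m'_r(\theta)=R_r(\theta)u(\theta)$. For each $\theta$, $D(\theta)=m(\theta)+\mathbb{R}u(\theta)$ is the line oriented by $u(\theta)$, and $D^+(\theta)=\{x:\langle x-m(\theta),u^\perp(\theta)\rangle\ge0\}$ is its closed left half-plane. The core of the tour is $K=\bigcap_{\theta}D^+(\theta)$. *)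

(* Stdlib reals + Coquelicot. Points of the plane are pairs (R * R),
   whose Coquelicot uniform structure is the product one (= usual topology). *)
From Stdlib Require Import Reals.
From Coquelicot Require Import Coquelicot.
Open Scope R_scope.

Definition pt := (R * R)%type.

(* S^1 = R / 2piZ : functions on S^1 are 2pi-periodic functions on R. *)
Definition periodic2pi {T : Type} (f : R -> T) : Prop :=
  forall t, f (t + 2 * PI) = f t.

Definition u (t : R) : pt := (cos t, sin t).
Definition uperp (t : R) : pt := (- sin t, cos t).

Definition dot (a b : pt) : R := fst a * fst b + snd a * snd b.
Definition psub (a b : pt) : pt := (fst a - fst b, snd a - snd b).
Definition padd (a b : pt) : pt := (fst a + fst b, snd a + snd b).
Definition pscal (k : R) (a : pt) : pt := (k * fst a, k * snd a).

Definition has_left_limit (f : R -> R) (t l : R) : Prop :=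
  filterlim f (at_left t) (locally l).
Definition has_right_limit (f : R -> R) (t l : R) : Prop :=
  filterlim f (at_right t) (locally l).

Definition ruled (f : R -> R) : Prop :=
  periodic2pi f /\
  forall t, (exists l, has_left_limit f t l) /\ (exists r, has_right_limit f t r).

Definition diff_quot (m : R -> pt) (t h : R) : pt :=
  pscal (/ h) (psub (m (t + h)) (m t)).
Definition is_left_deriv (m : R -> pt) (t : R) (v : pt) : Prop :=
  filterlim (diff_quot m t) (at_left 0) (locally v).
Definition is_right_deriv (m : R -> pt) (t : R) (v : pt) : Prop :=
  filterlim (diff_quot m t) (at_right 0) (locally v).

Definition tour (m : R -> pt) : Prop :=
  periodic2pi m /\
  (forall t, continuous m t) /\
  (forall t, exists vl, is_left_deriv m t vl) /\
  (forall t, exists vr, is_right_deriv m t vr) /\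
  exists Rf : R -> R, ruled Rf /\
    forall t, exists Rl Rr : R,
      has_left_limit Rf t Rl /\ has_right_limit Rf t Rr /\
      is_left_deriv m t (pscal Rl (u t)) /\
      is_right_deriv m t (pscal Rr (u t)).

Definition Dline (m : R -> pt) (t : R) (x : pt) : Prop :=
  exists s : R, x = padd (m t) (pscal s (u t)).
Definition Dplus (m : R -> pt) (t : R) (x : pt) : Prop :=
  dot (psub x (m t)) (uperp t) >= 0.

Definition core (m : R -> pt) (x : pt) : Prop := forall t : R, Dplus m t x.

Definition pinterior (A : pt -> Prop) (x : pt) : Prop := locally x A.
Definition pclosure (A : pt -> Prop) (x : pt) : Prop :=
  forall P : pt -> Prop, locally x P -> exists y, P y /\ A y.
Definition pboundary (A : pt -> Prop) (x : pt) : Prop :=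
  pclosure A x /\ ~ pinterior A x.

(* The point x lies in the interior of D+(t) exactly when its offset
   <x - m(t), u^perp(t)> is positive, and the offset is a continuous
   2pi-periodic function of t that is 1-Lipschitz in x (for the l1 norm).
   If x is interior to every D+(t), the offset is positive on the compact
   period [0, 2pi], hence bounded below by some delta > 0, and the delta/2-box
   around x stays in every D+(t).  A boundary point of K is a limit of points
   of K, so its offset is >= 0 everywhere, and it is not interior, so the
   offset is <= 0 at some t: there it vanishes, i.e. x lies on D(t). *)
From Stdlib Require Import Reals Lra Psatz Classical_Prop.
From Coquelicot Require Import Coquelicot.
Open Scope R_scope.

Lemma periodic2pi_nat {T : Type} (f : R -> T) t n :
  periodic2pi f -> f (t + 2 * PI * INR n) = f t.
Proof.
  intros Hf; induction n as [|n IHn].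
  - now rewrite Rmult_0_r, Rplus_0_r.
  - rewrite S_INR, <- IHn, <- (Hf (t + 2 * PI * INR n)); f_equal; ring.
Qed.

Lemma periodic2pi_Z {T : Type} (f : R -> T) t z :
  periodic2pi f -> f (t + 2 * PI * IZR z) = f t.
Proof.
  intros Hf; destruct z as [|p|p].
  - now rewrite Rmult_0_r, Rplus_0_r.
  - change (IZR (Zpos p)) with (IPR p); rewrite <- INR_IPR; now apply periodic2pi_nat.
  - rewrite <- (periodic2pi_nat f _ (Pos.to_nat p) Hf); f_equal.
    rewrite INR_IPR; change (IZR (Zneg p)) with (- IPR p); ring.
Qed.

Lemma shift_into_period t : exists z : Z, 0 <= t - 2 * PI * IZR z <= 2 * PI.
Proof.
  pose proof PI_RGT_0.
  destruct (archimed (t / (2 * PI))) as [Hup1 Hup2].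
  exists (up (t / (2 * PI)) - 1)%Z; rewrite minus_IZR.
  set (r := t / (2 * PI)) in *.
  replace t with (2 * PI * r) by (unfold r; field; lra).
  split; nra.
Qed.

Lemma periodic2pi_pos_lower_bound (f : R -> R) :
  periodic2pi f -> (forall t, continuity_pt f t) -> (forall t, 0 < f t) ->
  exists delta, 0 < delta /\ forall t, delta <= f t.
Proof.
  intros Hper Hcont Hpos; pose proof PI_RGT_0.
  destruct (continuity_ab_min f 0 (2 * PI) ltac:(lra) (fun c _ => Hcont c))
    as [t0 [Hmin _]].
  exists (f t0); split; [apply Hpos|]; intros t.
  destruct (shift_into_period t) as [z Hz].
  replace t with (t - 2 * PI * IZR z + 2 * PI * IZR z) by ring.
  rewrite periodic2pi_Z by exact Hper; apply Hmin, Hz.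
Qed.

Definition offset (m : R -> pt) (t : R) (x : pt) : R := dot (psub x (m t)) (uperp t).

Lemma offset_expand m t x :
  offset m t x = (fst x - fst (m t)) * (- sin t) + (snd x - snd (m t)) * cos t.
Proof. reflexivity. Qed.

Lemma offset_periodic m x : periodic2pi m -> periodic2pi (fun t => offset m t x).
Proof.
  intros Hm t; rewrite !offset_expand, Hm.
  replace (t + 2 * PI) with (t + 2 * INR 1 * PI) by (simpl; ring).
  now rewrite sin_period, cos_period.
Qed.

Lemma offset_continuous m x t :
  (forall t, continuous m t) -> continuity_pt (fun t => offset m t x) t.
Proof.
  intros Hm.
  assert (Hcomp : forall p : pt -> R, (forall q, continuous p q) ->
            continuity_pt (fun t => p (m t)) t).
  { intros p Hp; apply continuity_pt_filterlim, continuous_comp; auto. }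
  assert (H1 := Hcomp fst (fun '(a, b) => continuous_fst a b)).
  assert (H2 := Hcomp snd (fun '(a, b) => continuous_snd a b)).
  assert (Hconst : forall c : R, continuity_pt (fun _ => c) t).
  { intros c; now apply continuity_pt_const. }
  unfold offset, dot, psub, uperp; simpl.
  apply continuity_pt_plus; apply continuity_pt_mult.
  - now apply continuity_pt_minus.
  - apply continuity_pt_opp, continuity_sin.
  - now apply continuity_pt_minus.
  - apply continuity_cos.
Qed.

Lemma offset_lipschitz m t x y :
  Rabs (offset m t y - offset m t x) <= Rabs (fst y - fst x) + Rabs (snd y - snd x).
Proof.
  replace (offset m t y - offset m t x)
    with ((fst y - fst x) * - sin t + (snd y - snd x) * cos t)
    by (rewrite !offset_expand; ring).
  eapply Rle_trans; [apply Rabs_triang|].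
  rewrite !Rabs_mult, Rabs_Ropp.
  pose proof (Rabs_pos (fst y - fst x)); pose proof (Rabs_pos (snd y - snd x)).
  pose proof (Rabs_le (sin t) 1 (SIN_bound t)); pose proof (Rabs_le (cos t) 1 (COS_bound t)).
  nra.
Qed.

Lemma ball_pt (x y : pt) (e : R) :
  ball x e y <-> Rabs (fst y - fst x) < e /\ Rabs (snd y - snd x) < e.
Proof. reflexivity. Qed.

Lemma offset_ball m t (x y : pt) (e : R) :
  ball x e y -> offset m t x - 2 * e < offset m t y < offset m t x + 2 * e.
Proof.
  intros Hb; destruct (proj1 (ball_pt x y e) Hb) as [Hx Hy].
  pose proof (offset_lipschitz m t x y) as Hlip.
  assert (Hlt : Rabs (offset m t y - offset m t x) < 2 * e) by lra.
  apply Rabs_def2 in Hlt; lra.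
Qed.

Lemma pinterior_of_offset_bound m x delta :
  0 < delta -> (forall t, delta <= offset m t x) -> pinterior (core m) x.
Proof.
  intros Hdelta Hbound; exists (mkposreal (delta / 2) ltac:(lra)); intros y Hy t.
  change (offset m t y >= 0); pose proof (offset_ball m t x y _ Hy) as []; simpl in *.
  specialize (Hbound t); lra.
Qed.

Lemma pinterior_Dplus_iff m t x : pinterior (Dplus m t) x <-> offset m t x > 0.
Proof.
  split.
  - intros [e He]; pose proof (cond_pos e).
    (* y = x - (e/2) u^perp(t) *)
    set (y := (fst x + e / 2 * sin t, snd x - e / 2 * cos t)).
    assert (Hy : ball x e y).
    { pose proof (Rabs_le (sin t) 1 (SIN_bound t)); pose proof (Rabs_le (cos t) 1 (COS_bound t)).
      apply ball_pt; simpl; split; [replace (_ + _ - _) with (e / 2 * sin t) by ring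
                    | replace (_ - _ - _) with (- (e / 2 * cos t)) by ring;
                      rewrite Rabs_Ropp];
        rewrite Rabs_mult, Rabs_right by lra; nra. }
    assert (Hshift : offset m t y = offset m t x - e / 2).
    { rewrite !offset_expand; simpl; pose proof (sin2_cos2 t); unfold Rsqr in *; nra. }
    specialize (He y Hy); change (offset m t y >= 0) in He; lra.
  - intros Hpos; exists (mkposreal (offset m t x / 2) ltac:(lra)); intros y Hy.
    change (offset m t y >= 0); pose proof (offset_ball m t x y _ Hy) as []; simpl in *; lra.
Qed.

Lemma pclosure_core_offset_nonneg m x t : pclosure (core m) x -> offset m t x >= 0.
Proof.
  intros Hcl; apply Rnot_lt_ge; intros Hneg.
  destruct (Hcl (fun y => offset m t y < 0)) as [y [Hy Hcore]].
  { exists (mkposreal (- offset m t x / 2) ltac:(lra)); intros y Hy.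
    pose proof (offset_ball m t x y _ Hy) as []; simpl in *; lra. }
  specialize (Hcore t); change (offset m t y >= 0) in Hcore; lra.
Qed.

Lemma offset_zero_Dline m t x : offset m t x = 0 -> Dline m t x.
Proof.
  rewrite offset_expand; intros H0.
  exists ((fst x - fst (m t)) * cos t + (snd x - snd (m t)) * sin t).
  pose proof (sin2_cos2 t) as Hsc; unfold Rsqr in Hsc.
  destruct x as [x1 x2]; unfold padd, pscal, u; simpl in *; f_equal.
  - transitivity (x1 + sin t * ((x1 - fst (m t)) * - sin t + (x2 - snd (m t)) * cos t)
                  + (x1 - fst (m t)) * (sin t * sin t + cos t * cos t - 1)).
    + rewrite H0, Hsc; ring.
    + ring.
  - transitivity (x2 - cos t * ((x1 - fst (m t)) * - sin t + (x2 - snd (m t)) * cos t)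
                  + (x2 - snd (m t)) * (sin t * sin t + cos t * cos t - 1)).
    + rewrite H0, Hsc; ring.
    + ring.
Qed.

Theorem mainTheorem2 (m : R -> pt) (Hm : tour m) :
  (forall x : pt, pinterior (core m) x <-> (forall t : R, pinterior (Dplus m t) x)) /\
  (forall x : pt, pboundary (core m) x -> exists t : R, Dline m t x).
Proof.
  destruct Hm as [Hper [Hcont _]].
  assert (Hint : forall x, pinterior (core m) x <-> forall t, pinterior (Dplus m t) x).
  { intros x; split.
    - intros [e He] t; exists e; intros y Hy; apply (He y Hy).
    - intros Hall.
      destruct (periodic2pi_pos_lower_bound (fun t => offset m t x)
                  (offset_periodic m x Hper) (fun t => offset_continuous m x t Hcont)
                  (fun t => proj1 (pinterior_Dplus_iff m t x) (Hall t)))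
        as [delta [Hdelta Hbound]].
      exact (pinterior_of_offset_bound m x delta Hdelta Hbound). }
  split; [exact Hint|].
  intros x [Hcl Hnotint].
  assert (Hle : exists t, offset m t x <= 0).
  { apply NNPP; intros Hnone; apply Hnotint, Hint; intros t.
    apply pinterior_Dplus_iff, Rnot_le_gt; intros Ht; eauto. }
  destruct Hle as [t Ht]; exists t.
  apply offset_zero_Dline.
  pose proof (pclosure_core_offset_nonneg m x t Hcl); lra.
Qed.
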